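(* Let $n$ and $d$ be positive integers and $N(n,d,0)=\{\mathbf{s}_d\in A(d): s_{(n-1)\bmod d}=s_{d-1}\}$. If $d$ is composite, then $$|N(n,d,0)|=\begin{cases}|A(d)|=\sum_{e\mid d}\mu(e)2^{d/e}, & d\mid n,\\ 2^{d-1}-2-\sum_{e\mid d,\,1<e<d}|N(n,e,0)|, & d\nmid n.\end{cases}$$ If $d$ is prime, then $|N(n,d,0)|=|A(d)|=2^d-2$ if $d\mid n$, and $|N(n,d,0)|=2^{d-1}-2$ if $d\nmid n$.
   Context: Sequences are binary (entries in $\mathbb{Z}_2$); $x\bmod d$ is the least nonnegative residue. A length-$m$ sequence is periodic if it is the concatenation of $m/e$ copies of a length-$e$ sequence for a proper divisor $e$ of $m$, aperiodic otherwise. $A(d)$ is the set of aperiodic binary sequences $\mathbf{s}_d=(s_0,\dots,s_{d-1})$ of length $d$. $\mu$ is the Möbius function: $\mu(1)=1$, $\mu(m)=(-1)^k$ if $m$ is a product of $k$ distinct primes, $\mu(m)=0$ if $m$ is divisible by the square of a prime. *)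

From mathcomp Require Import all_boot all_order all_algebra.
Set Implicit Arguments. Unset Strict Implicit. Unset Printing Implicit Defensive.
Import GRing.Theory Num.Theory.

(* Binary sequences of length m are m.-tuple bool; s_i = nth false s i. *)

Definition periodic (m : nat) (s : seq bool) : bool :=
  [exists e : 'I_m, (e %| m) &&
     [exists t : e.-tuple bool, s == flatten (nseq (m %/ e) (val t))]].

Definition A (m : nat) : {set m.-tuple bool} :=
  [set s : m.-tuple bool | ~~ periodic m s].

Definition N0 (n m : nat) : {set m.-tuple bool} :=
  [set s in A m | nth false s ((n - 1) %% m) == nth false s (m - 1)].

Definition mobius (m : nat) : int :=
  if m == 0 then 0%R
  else if all (fun p => logn p m == 1) (primes m)
       then ((-1) ^+ size (primes m))%R else 0%R.

(* Every binary word of length m is, in exactly one way, the m/e-fold repetition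
   of an aperiodic word of length e, namely its prefix of length e = its primitive
   period, a divisor of m.  Counting all words gives 2^m = sum_{e | m} |A(e)|,
   which Moebius inversion turns into the formula for |A(d)|.  If m does not
   divide n, the positions (n-1) mod m and m-1 differ, so exactly 2^(m-1) words
   agree there; a repetition of t agrees there iff t agrees at the positions
   reduced mod e, i.e. iff t lies in N(n,e,0).  Hence
   2^(m-1) = sum_{e | m} |N(n,e,0)|, and N(n,1,0) = A(1) has 2 elements.  If d
   divides n, both positions are d-1 and N(n,d,0) = A(d). *)

From mathcomp Require Import all_boot all_order all_algebra zify ring.
Import GRing.Theory Num.Theory.

Set Implicit Arguments.
Unset Strict Implicit.
Unset Printing Implicit Defensive.

(** * Periods of cyclically read words *)

Definition cnth (s : seq bool) (i : nat) : bool := nth false s (i %% size s).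

Definition is_period (T : Type) (f : nat -> T) (e : nat) := forall i, f (i + e) = f i.

Section Periods.
Variables (T : Type) (f : nat -> T).

Lemma is_period_addMn e k i : is_period f e -> f (i + k * e) = f i.
Proof.
move=> fe; elim: k i => [|k IHk] i; first by rewrite mul0n addn0.
by rewrite mulSn addnA IHk fe.
Qed.

Lemma is_period_mod e i : is_period f e -> f i = f (i %% e).
Proof. by move=> fe; rewrite {1}(divn_eq i e) addnC is_period_addMn. Qed.

Lemma is_period_gcd a b :
  0 < a -> is_period f a -> is_period f b -> is_period f (gcdn a b).
Proof.
move=> a_gt0 fa fb i; have [k l def_gcd _] := egcdnP b a_gt0.
by rewrite -(is_period_addMn l _ fb) -addnA (addnC (gcdn a b)) -def_gcd is_period_addMn.
Qed.

End Periods.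

Lemma is_period_cnth_size s : is_period (cnth s) (size s).
Proof. by move=> i; rewrite /cnth modnDr. Qed.

Definition periodb (s : seq bool) (e : nat) : bool :=
  all (fun i => cnth s (i + e) == cnth s i) (iota 0 (size s)).

Lemma periodbP s e : reflect (is_period (cnth s) e) (periodb s e).
Proof.
apply: (iffP allP) => [se i | se i _]; last by rewrite se.
have [s0 | s_gt0] := posnP (size s).
  by rewrite /cnth s0 !modn0; move/size0nil: s0 => ->; rewrite !nth_nil.
have := se (i %% size s); rewrite mem_iota ltn_mod s_gt0 => /(_ isT) /eqP.
by rewrite /cnth modn_mod modnDml.
Qed.

Lemma exists_dvd_period s : exists e, (e %| size s) && periodb s e.
Proof. by exists (size s); rewrite dvdnn; apply/periodbP/is_period_cnth_size. Qed.

Definition primitive_period (s : seq bool) : nat := ex_minn (exists_dvd_period s).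

Lemma primitive_periodP s : 0 < size s ->
  [/\ 0 < primitive_period s, primitive_period s %| size s
    & is_period (cnth s) (primitive_period s)].
Proof.
rewrite /primitive_period => s_gt0; case: ex_minnP => p /andP[p_dvd /periodbP sp] _.
by split=> //; apply: dvdn_gt0 p_dvd.
Qed.

Lemma primitive_period_dvd s e :
  0 < size s -> 0 < e -> is_period (cnth s) e -> primitive_period s %| e.
Proof.
move=> s_gt0 e_gt0 se; have [p_gt0 _ _] := primitive_periodP s_gt0.
move: p_gt0; rewrite /primitive_period; case: ex_minnP => p /andP[p_dvd sp] p_min p_gt0.
have g_dvd : gcdn p e %| size s by rewrite (dvdn_trans (dvdn_gcdl _ _)).
have /p_min : (gcdn p e %| size s) && periodb s (gcdn p e).
  by rewrite g_dvd; apply/periodbP/is_period_gcd => //; apply/periodbP.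
have g_le : gcdn p e <= p by rewrite dvdn_leq ?dvdn_gcdl.
by move=> p_le; rewrite -(@anti_leq (gcdn p e) p) ?p_le ?g_le ?dvdn_gcdr.
Qed.

Lemma primitive_period_eq s s' : 0 < size s -> 0 < size s' ->
  cnth s =1 cnth s' -> primitive_period s = primitive_period s'.
Proof.
move=> s_gt0 s'_gt0 ss'; have [p_gt0 _ sp] := primitive_periodP s_gt0.
have [p'_gt0 _ s'p'] := primitive_periodP s'_gt0.
apply/eqP; rewrite eqn_dvd !primitive_period_dvd //.
  by move=> i; rewrite -!ss' sp.
by move=> i; rewrite !ss' s'p'.
Qed.

Lemma size_flatten_nseq (T : Type) k (t : seq T) :
  size (flatten (nseq k t)) = k * size t.
Proof. by elim: k => //= k IHk; rewrite size_cat IHk mulSn. Qed.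

Lemma nth_flatten_nseq (T : Type) (x0 : T) k t j : j < k * size t ->
  nth x0 (flatten (nseq k t)) j = nth x0 t (j %% size t).
Proof.
elim: k j => [|k IHk] j //=; rewrite mulSn nth_cat => j_lt.
case: ltnP => [j_lt_t | j_ge_t]; first by rewrite modn_small.
rewrite IHk; last by rewrite ltn_subLR.
by rewrite -{2}(subnK j_ge_t) modnDr.
Qed.

Definition repeat_tuple m e (t : e.-tuple bool) : m.-tuple bool :=
  [tuple of mkseq (fun i => nth false t (i %% e)) m].

Definition prefix_tuple e (s : seq bool) : e.-tuple bool :=
  [tuple of mkseq (nth false s) e].

Section RepeatTuple.
Variables (m e : nat).
Hypotheses (m_gt0 : 0 < m) (e_dvd_m : e %| m).

Let e_gt0 : 0 < e. Proof. exact: dvdn_gt0 e_dvd_m. Qed.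

Lemma nth_repeat_tuple (t : e.-tuple bool) i : i < m ->
  nth false (repeat_tuple m t) i = nth false t (i %% e).
Proof. by move=> i_lt; rewrite nth_mkseq. Qed.

Lemma flatten_nseq_repeat (t : e.-tuple bool) :
  flatten (nseq (m %/ e) (val t)) = repeat_tuple m t.
Proof.
apply: (@eq_from_nth _ false) => [|i]; rewrite size_flatten_nseq !size_tuple divnK //.
by move=> i_lt; rewrite nth_flatten_nseq size_tuple ?divnK // nth_repeat_tuple.
Qed.

Lemma cnth_repeat_tuple (t : e.-tuple bool) : cnth (repeat_tuple m t) =1 cnth t.
Proof.
move=> i; rewrite /cnth !size_tuple nth_repeat_tuple ?ltn_mod //.
by rewrite modn_dvdm.
Qed.

Lemma repeat_tuple_inj : injective (@repeat_tuple m e).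
Proof.
move=> t t' tt'; apply/val_inj/(@eq_from_nth _ false); rewrite ?size_tuple // => i i_lt.
have i_lt_m : i < m := leq_trans i_lt (dvdn_leq m_gt0 e_dvd_m).
have := congr1 (fun s : m.-tuple bool => nth false s i) tt'.
by rewrite !nth_repeat_tuple // modn_small.
Qed.

Lemma repeat_prefix_tuple (s : m.-tuple bool) :
  is_period (cnth s) e -> repeat_tuple m (prefix_tuple e s) = s.
Proof.
move=> se; apply/val_inj/(@eq_from_nth _ false); rewrite ?size_tuple // => i i_lt.
have ie_lt : i %% e < m := leq_trans (ltn_pmod i e_gt0) (dvdn_leq m_gt0 e_dvd_m).
have := is_period_mod i se; rewrite /cnth size_tuple (modn_small i_lt) (modn_small ie_lt) => ->.
by rewrite nth_repeat_tuple // nth_mkseq ?ltn_pmod.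
Qed.

End RepeatTuple.

Lemma periodicE m (s : m.-tuple bool) :
  0 < m -> periodic m s = (primitive_period s < m).
Proof.
move=> m_gt0; have s_gt0 : 0 < size s by rewrite size_tuple.
have [p_gt0 p_dvd sp] := primitive_periodP s_gt0; rewrite size_tuple in p_dvd.
apply/existsP/idP => [[[e e_lt] /= /andP[e_dvd /existsP[t /eqP def_s]]] | p_lt].
  rewrite flatten_nseq_repeat // in def_s.
  have se : is_period (cnth s) e.
    move=> i; rewrite def_s !(cnth_repeat_tuple m_gt0 e_dvd).
    by have := is_period_cnth_size t i; rewrite size_tuple.
  have e_gt0 := dvdn_gt0 m_gt0 e_dvd.
  exact: leq_ltn_trans (dvdn_leq e_gt0 (primitive_period_dvd s_gt0 e_gt0 se)) e_lt.
exists (Ordinal p_lt); rewrite /= p_dvd; apply/existsP; exists (prefix_tuple _ s).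
by rewrite flatten_nseq_repeat // repeat_prefix_tuple.
Qed.

Lemma aperiodicE m (s : m.-tuple bool) :
  0 < m -> (s \in A m) = (primitive_period s == m).
Proof.
move=> m_gt0; have s_gt0 : 0 < size s by rewrite size_tuple.
have [_ p_dvd _] := primitive_periodP s_gt0; rewrite size_tuple in p_dvd.
by rewrite inE periodicE // -leqNgt eqn_leq (dvdn_leq m_gt0 p_dvd).
Qed.

(** * Decomposition by the primitive period *)

Lemma card_partition_seq (T : finType) (I : eqType) (r : seq I) (f : T -> I)
    (P : pred T) :
  uniq r -> (forall x, P x -> f x \in r) ->
  #|[set x | P x]| = \sum_(i <- r) #|[set x | P x & f x == i]|.
Proof.
move=> r_uniq f_in_r; rewrite -sum1dep_card.
transitivity (\sum_(x | P x) \sum_(i <- r | f x == i) 1).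
  apply: eq_bigr => x Px; rewrite sum1_count -[LHS]/(nat_of_bool true).
  by rewrite -(f_in_r x Px) -(count_uniq_mem _ r_uniq); apply: eq_count => i /=.
rewrite (exchange_big_dep predT) //; apply: eq_bigr => i _.
by rewrite sum1dep_card.
Qed.

Section PrimitivePeriodDecomposition.
Variables (m : nat) (Q : pred (m.-tuple bool)).
Hypothesis m_gt0 : 0 < m.

Lemma primitive_period_repeat e (t : e.-tuple bool) :
  e %| m -> t \in A e -> primitive_period (repeat_tuple m t) = e.
Proof.
move=> e_dvd; have e_gt0 := dvdn_gt0 m_gt0 e_dvd.
rewrite aperiodicE // => /eqP p_t; apply: etrans p_t.
by apply: primitive_period_eq; rewrite ?size_tuple //; apply: cnth_repeat_tuple.
Qed.

Lemma prefix_tuple_aperiodic (s : m.-tuple bool) :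
  prefix_tuple (primitive_period s) s \in A (primitive_period s).
Proof.
have s_gt0 : 0 < size s by rewrite size_tuple.
have [p_gt0 p_dvd sp] := primitive_periodP s_gt0; rewrite size_tuple in p_dvd.
have def_s := repeat_prefix_tuple m_gt0 p_dvd sp.
rewrite aperiodicE //; apply/eqP/(etrans _ (congr1 (@primitive_period \o val) def_s)).
by symmetry; apply: primitive_period_eq; rewrite ?size_tuple //; apply: cnth_repeat_tuple.
Qed.

Lemma card_primitive_period_eq e : e %| m ->
  #|[set s | Q s & primitive_period s == e]| =
  #|[set t : e.-tuple bool | (t \in A e) && Q (repeat_tuple m t)]|.
Proof.
move=> e_dvd; rewrite -(card_imset _ (repeat_tuple_inj m_gt0 e_dvd)).
apply: eq_card => s; rewrite inE; apply/andP/imsetP => [[Qs /eqP p_s] | [t]].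
  subst e; have s_gt0 : 0 < size s by rewrite size_tuple.
  have [_ _ sp] := primitive_periodP s_gt0.
  have def_s := repeat_prefix_tuple m_gt0 e_dvd sp.
  by exists (prefix_tuple _ s); rewrite // inE def_s Qs prefix_tuple_aperiodic.
by rewrite inE => /andP[tA Qt] ->; rewrite primitive_period_repeat.
Qed.

Lemma card_by_primitive_period :
  #|[set s | Q s]| =
  \sum_(e <- divisors m) #|[set t : e.-tuple bool | (t \in A e) && Q (repeat_tuple m t)]|.
Proof.
rewrite (card_partition_seq (divisors_uniq m) (f := fun s : m.-tuple bool => primitive_period s)).
  rewrite big_seq [RHS]big_seq; apply: eq_bigr => e.
  by rewrite -dvdn_divisors // => /card_primitive_period_eq.
move=> s _; have s_gt0 : 0 < size s by rewrite size_tuple.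
have [_ p_dvd _] := primitive_periodP s_gt0.
by rewrite -dvdn_divisors // -{2}(size_tuple s).
Qed.

End PrimitivePeriodDecomposition.

Lemma sum_card_aperiodic m :
  0 < m -> 2 ^ m = \sum_(e <- divisors m) #|A e|.
Proof.
move=> m_gt0; rewrite -card_bool -card_tuple -cardsT.
rewrite -[setT]/[set s : m.-tuple bool | predT s] card_by_primitive_period //.
by apply: eq_bigr => e _; apply: eq_card => t; rewrite !inE andbT.
Qed.

Definition toggle_nth m j (s : m.-tuple bool) : m.-tuple bool :=
  [tuple of mkseq (fun i => (i == j) (+) nth false s i) m].

Lemma nth_toggle_nth m j (s : m.-tuple bool) i : i < m ->
  nth false (toggle_nth j s) i = (i == j) (+) nth false s i.
Proof. by move=> i_lt; rewrite nth_mkseq. Qed.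

Lemma toggle_nthK m j : involutive (@toggle_nth m j).
Proof.
move=> s; apply/val_inj/(@eq_from_nth _ false); rewrite ?size_tuple // => i i_lt.
by rewrite !nth_toggle_nth // addbA addbb.
Qed.

(* Toggling s_j is a bijection between the tuples with s_i = s_j and the others. *)
Lemma card_nth_eq m i j : i < m -> j < m -> i != j ->
  #|[set s : m.-tuple bool | nth false s i == nth false s j]| = 2 ^ m.-1.
Proof.
move=> i_lt j_lt neq_ij; set S := [set s | _].
have toggleS : toggle_nth j @: S = ~: S.
  apply/setP => s; rewrite !inE.
  rewrite -{1}(toggle_nthK j s) (mem_imset _ _ (can_inj (toggle_nthK j))) inE.
  by rewrite !nth_toggle_nth // (negbTE neq_ij) eqxx; case: (nth _ s i); case: (nth _ s j).
have := cardsC S; rewrite -toggleS card_imset ?card_tuple ?card_bool; last first.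
  exact: can_inj (toggle_nthK j).
have : 2 ^ m = 2 * 2 ^ m.-1 by rewrite -expnS prednK // (leq_ltn_trans _ i_lt).
lia.
Qed.

Lemma modn_sub1_dvd m e : 0 < m -> e %| m -> (m - 1) %% e = e - 1.
Proof.
move=> m_gt0 e_dvd; rewrite !subn1; have [-> | e_neq1] := eqVneq e 1.
  by rewrite modn1.
by rewrite modn_pred // e_dvd.
Qed.

Lemma sum_card_N0 n m : 0 < n -> 0 < m -> ~~ (m %| n) ->
  2 ^ (m - 1) = \sum_(e <- divisors m) #|N0 n e|.
Proof.
move=> n_gt0 m_gt0 m_ndvd; have r_lt : (n - 1) %% m < m by rewrite ltn_mod.
have last_lt : m - 1 < m by lia.
have r_neq : (n - 1) %% m != m - 1.
  apply: contra m_ndvd => /eqP r_eq.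
  by rewrite /dvdn -(subnK n_gt0) -modnDml r_eq subnK ?modnn.
rewrite subn1 -(card_nth_eq r_lt last_lt r_neq) card_by_primitive_period //.
rewrite big_seq [RHS]big_seq; apply: eq_bigr => e; rewrite -dvdn_divisors // => e_dvd.
apply: eq_card => t; rewrite !inE !nth_repeat_tuple //.
by rewrite modn_dvdm // (modn_sub1_dvd m_gt0 e_dvd).
Qed.

Lemma N0_eq_A n d : 0 < n -> d %| n -> N0 n d = A d.
Proof.
move=> n_gt0 d_dvd; apply/setP => s.
by rewrite !inE modn_sub1_dvd ?eqxx ?andbT // (dvdn_gt0 n_gt0 d_dvd).
Qed.

Lemma aperiodic1 (s : 1.-tuple bool) : s \in A 1.
Proof.
have s_gt0 : 0 < size s by rewrite size_tuple.
have [_ p_dvd _] := primitive_periodP s_gt0.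
by rewrite size_tuple dvdn1 in p_dvd; rewrite aperiodicE.
Qed.

Lemma card_A1 : #|A 1| = 2.
Proof.
have -> : A 1 = setT by apply/setP => s; rewrite in_setT aperiodic1.
by rewrite cardsT card_tuple card_bool.
Qed.

(** * Moebius inversion *)

Lemma eq_big_filter_mem (R : Type) (idx : R) (op : Monoid.com_law idx)
    (I : eqType) (r1 r2 : seq I) (P1 P2 : pred I) (F : I -> R) :
  uniq r1 -> uniq r2 -> (forall x, P1 x && (x \in r1) = P2 x && (x \in r2)) ->
  \big[op/idx]_(x <- r1 | P1 x) F x = \big[op/idx]_(x <- r2 | P2 x) F x.
Proof.
move=> r1_uniq r2_uniq r12; rewrite -big_filter -[RHS]big_filter; apply: perm_big.
by apply: uniq_perm; rewrite ?filter_uniq // => x; rewrite !mem_filter r12.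
Qed.

Section DivisorsOfPrimeMultiple.
Variables (R : Type) (idx : R) (op : Monoid.com_law idx) (F : nat -> R).
Variables (p k : nat).
Hypotheses (p_prime : prime p) (k_gt0 : 0 < k).

Let pk_gt0 : 0 < p * k. Proof. by rewrite muln_gt0 prime_gt0. Qed.

Lemma big_divisors_primeM_dvd :
  \big[op/idx]_(e <- divisors (p * k) | p %| e) F e =
  \big[op/idx]_(e <- divisors k) F (p * e).
Proof.
rewrite -(big_map (muln p) xpredT); apply: eq_big_filter_mem.
- exact: divisors_uniq.
- rewrite map_inj_uniq ?divisors_uniq // => x y /eqP.
  by rewrite eqn_pmul2l ?prime_gt0 // => /eqP.
move=> e; rewrite -dvdn_divisors //; apply/andP/mapP => [[/dvdnP[f ->] fp_dvd] | [f]].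
  by exists f; rewrite 1?mulnC // -dvdn_divisors // -(dvdn_pmul2l (prime_gt0 p_prime)) mulnC.
by rewrite -dvdn_divisors // => f_dvd ->; rewrite dvdn_mulr // dvdn_pmul2l ?prime_gt0.
Qed.

Lemma big_divisors_primeM_ndvd :
  \big[op/idx]_(e <- divisors (p * k) | ~~ (p %| e)) F e =
  \big[op/idx]_(e <- divisors k | ~~ (p %| e)) F e.
Proof.
apply: eq_big_filter_mem; rewrite ?divisors_uniq // => e.
rewrite -!dvdn_divisors //; have [//|p_ndvd] := boolP (p %| e).
by rewrite Gauss_dvdr // coprime_sym prime_coprime.
Qed.

End DivisorsOfPrimeMultiple.

Section Mobius.
Local Open Scope ring_scope.

Lemma mobius_primeM p e : prime p -> (0 < e)%N -> ~~ (p %| e)%N ->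
  mobius (p * e) = - mobius e.
Proof.
move=> p_prime e_gt0 p_ndvd; have p_gt0 := prime_gt0 p_prime.
have pe_gt0 : (0 < p * e)%N by rewrite muln_gt0 p_gt0.
have p_nprimes : p \notin primes e by rewrite mem_primes (negbTE p_ndvd) !andbF.
have primes_pe : perm_eq (primes (p * e)) (p :: primes e).
  apply: uniq_perm; rewrite /= ?primes_uniq ?p_nprimes // => q.
  by rewrite primesM // primes_prime // inE.
rewrite /mobius muln_eq0 !gtn_eqF //= (perm_size primes_pe) (perm_all _ primes_pe) /=.
rewrite lognM // logn_prime // eqxx logn_coprime ?prime_coprime //=.
rewrite (@eq_in_all _ _ (fun q => logn q e == 1%N)) => [|q q_e]; last first.
  rewrite lognM // logn_prime // (_ : (q == p) = false) //.
  by apply: contraNF p_nprimes => /eqP <-.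
by case: ifP => _; rewrite ?exprS ?mulN1r ?oppr0.
Qed.

Lemma mobius_primeM_dvd p e : prime p -> (p %| e)%N -> mobius (p * e) = 0.
Proof.
move=> p_prime p_dvd; have [-> | e_gt0] := posnP e; first by rewrite muln0.
have p_gt0 := prime_gt0 p_prime; have pe_gt0 : (0 < p * e)%N by rewrite muln_gt0 p_gt0.
rewrite /mobius muln_eq0 !gtn_eqF //=; case: ifP => // /allP /(_ p).
rewrite mem_primes p_prime pe_gt0 dvdn_mulr // => /(_ isT).
rewrite lognM // logn_prime // eqxx add1n eqSS -leqn0 leqNgt logn_gt0.
by rewrite mem_primes p_prime e_gt0 p_dvd.
Qed.

Lemma sum_mobius_divisors k : (0 < k)%N ->
  \sum_(e <- divisors k) mobius e = (k == 1)%:R.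
Proof.
move=> k_gt0; have [k_le1 | k_gt1] := leqP k 1.
  have -> : k = 1%N by lia.
  by rewrite (_ : divisors 1 = [:: 1%N]) // big_seq1.
have p_prime := pdiv_prime k_gt1; set p := pdiv k in p_prime *.
have p_dvd : (p %| k)%N := pdiv_dvd k.
have def_k : k = (p * (k %/ p))%N by rewrite mulnC divnK.
have k'_gt0 : (0 < k %/ p)%N.
  by rewrite divn_gt0 ?prime_gt0 //; apply: dvdn_leq p_dvd.
rewrite gtn_eqF // def_k (bigID (fun e => p %| e)%N) /=.
rewrite big_divisors_primeM_dvd // big_divisors_primeM_ndvd //.
rewrite (bigID (fun e => p %| e)%N) /= big1 => [|e /mobius_primeM_dvd->] //.
rewrite add0r big_seq_cond (eq_bigr (fun e => - mobius e)) => [|e /andP[e_dvd p_ndvd]].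
  by rewrite -big_seq_cond sumrN addNr.
by rewrite mobius_primeM // (dvdn_gt0 k'_gt0) // dvdn_divisors.
Qed.

Lemma mobius_inversion (V : zmodType) (a g : nat -> V) m : (0 < m)%N ->
  (forall k, (0 < k)%N -> g k = \sum_(f <- divisors k) a f) ->
  a m = \sum_(e <- divisors m) g (m %/ e)%N *~ mobius e.
Proof.
move=> m_gt0 def_g.
have quo_gt0 f : (f %| m)%N -> (0 < m %/ f)%N.
  by move=> f_dvd; rewrite divn_gt0 ?(dvdn_gt0 m_gt0 f_dvd) //; apply: dvdn_leq f_dvd.
have dvd_quoC e f : (e %| m)%N -> (f %| m)%N -> (f %| m %/ e)%N = (e %| m %/ f)%N.
  by move=> e_dvd f_dvd; rewrite !dvdn_divRL // mulnC.
transitivity (\sum_(f <- divisors m) a f *~ (m %/ f == 1)%N%:R).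
  rewrite (bigD1_seq m) ?divisors_id ?divisors_uniq //= divnn m_gt0 eqxx mulr1z.
  rewrite big_seq_cond big1 ?addr0 // => f /andP[f_dvd f_neq]; rewrite -dvdn_divisors // in f_dvd.
  suff /negbTE-> : (m %/ f != 1)%N by rewrite mulr0z.
  by apply: contra f_neq => /eqP quo1; rewrite -(divnK f_dvd) quo1 mul1n.
transitivity (\sum_(f <- divisors m) \sum_(e <- divisors m | (f %| m %/ e)%N) a f *~ mobius e).
  rewrite big_seq [RHS]big_seq; apply: eq_bigr => f; rewrite -dvdn_divisors // => f_dvd.
  rewrite -sum_mobius_divisors ?quo_gt0 // mulrz_sumr.
  apply: eq_big_filter_mem; rewrite ?divisors_uniq // => e.
  rewrite -!dvdn_divisors ?quo_gt0 //=.
  have [e_dvd | e_ndvd] := boolP (e %| m)%N; first by rewrite andbT dvd_quoC.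
  by rewrite andbF; apply/negbTE; apply: contra e_ndvd => /dvdn_trans; apply; apply: dvdn_div.
rewrite (exchange_big_dep predT) //= big_seq [RHS]big_seq; apply: eq_bigr => e.
rewrite -dvdn_divisors // => e_dvd; rewrite def_g ?quo_gt0 //.
rewrite mulrz_suml; apply: eq_big_filter_mem; rewrite ?divisors_uniq // => f.
rewrite -!dvdn_divisors ?quo_gt0 //.
have [f_dvd | f_ndvd] := boolP (f %| m)%N; first by rewrite andbT.
by rewrite andbF; apply/esym/negbTE; apply: contra f_ndvd => /dvdn_trans; apply; apply: dvdn_div.
Qed.

End Mobius.

Section DivisorSplit.
Variables (V : nmodType) (F : nat -> V).

Lemma big_divisors_split d : 1 < d ->
  (\sum_(e <- divisors d) F e =
   F 1 + F d + \sum_(e <- divisors d | (1 < e < d)%N) F e)%R.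
Proof.
move=> d_gt1; have d_gt0 : 0 < d by lia.
rewrite (bigID (fun e => 1 < e < d)) /= addrC; congr (_ + _)%R.
rewrite -big_filter (perm_big [:: 1; d]); first by rewrite big_cons big_seq1.
apply: uniq_perm; rewrite ?filter_uniq ?divisors_uniq //= ?inE; first by lia.
move=> e; rewrite mem_filter !inE -dvdn_divisors //.
have [e_dvd | e_ndvd] := boolP (e %| d).
  by have := dvdn_leq d_gt0 e_dvd; have := dvdn_gt0 d_gt0 e_dvd; lia.
by rewrite andbF; apply/esym/negbTE; apply: contra e_ndvd => /orP[] /eqP->.
Qed.

Lemma big_divisors_prime d : prime d -> (\sum_(e <- divisors d) F e = F 1 + F d)%R.
Proof.
move=> d_prime; rewrite big_divisors_split ?prime_gt1 // big_seq_cond big_pred0 ?addr0 //.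
move=> e; apply/negbTE/negP => /andP[]; rewrite -dvdn_divisors ?prime_gt0 //.
by case/primeP: d_prime => _ d_div /d_div /orP[] /eqP->; lia.
Qed.

End DivisorSplit.

Local Open Scope ring_scope.

Theorem lemma10 (n d : nat) (hn : (0 < n)%N) (hd : (0 < d)%N) :
  (((1 < d)%N && ~~ prime d) ->
     (((d %| n)%N ->
        #|N0 n d| = #|A d| /\
        (#|A d|%:Z = \sum_(e <- divisors d) mobius e * 2 ^+ (d %/ e))) /\
      (~~ (d %| n)%N ->
        #|N0 n d|%:Z = 2 ^+ (d - 1) - 2
                       - \sum_(e <- divisors d | (1 < e < d)%N) #|N0 n e|%:Z))) /\
  (prime d ->
     (((d %| n)%N -> #|N0 n d| = #|A d| /\ #|A d|%:Z = 2 ^+ d - 2) /\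
      (~~ (d %| n)%N -> #|N0 n d|%:Z = 2 ^+ (d - 1) - 2))).
Proof.
have card_A_sum k : (0 < k)%N -> 2 ^+ k = \sum_(e <- divisors k) #|A e|%:Z.
  move=> k_gt0; have := congr1 Posz (sum_card_aperiodic k_gt0).
  by rewrite raddf_sum => <-; rewrite -natz natrX.
have card_N0_sum : ~~ (d %| n)%N ->
    2 ^+ (d - 1) = \sum_(e <- divisors d) #|N0 n e|%:Z.
  move=> d_ndvd; have := congr1 Posz (sum_card_N0 hn hd d_ndvd).
  by rewrite raddf_sum => <-; rewrite -natz natrX.
have card_N0_1 : #|N0 n 1|%:Z = 2 by rewrite N0_eq_A ?dvd1n ?card_A1.
split=> [/andP[d_gt1 _] | d_prime]; split=> [d_dvd | d_ndvd].
- rewrite N0_eq_A //; split=> //.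
  rewrite (eq_bigr (fun e => 2 ^+ (d %/ e) *~ mobius e)) => [|e _].
    exact: mobius_inversion hd card_A_sum.
  by rewrite mulrzz mulrC.
- by rewrite card_N0_sum // big_divisors_split // card_N0_1; ring.
- rewrite N0_eq_A //; split=> //.
  by rewrite card_A_sum // big_divisors_prime // card_A1; ring.
- by rewrite card_N0_sum // big_divisors_prime // card_N0_1; ring.
Qed.
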